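(* Let $G=(V,E)$ be a finite, undirected, connected graph with $V=\{1,\dots,N\}$ and neighbourhoods $N(i)$. For $t\ge0$ and $j\in N(i)$ let $m_{ij}(t)\ge0$ be the transition rates of a reference process, set $m_{ii}(t)=-\sum_{j\in N(i)}m_{ij}(t)$ (so the reference process is mass-preserving), and let the reference marginal evolve by $\frac{d}{dt}\tilde\rho_i=\sum_{j\in N(i)}\big(m_{ji}\tilde\rho_j-m_{ij}\tilde\rho_i\big)$. Assume the reference process possesses a stationary measure $\rho^*$, i.e. $\rho^*$ is a probability vector with $\rho^*_i>0$ for all $i$ and $\sum_{j\in N(i)}\big(m_{ji}(t)\rho^*_j-m_{ij}(t)\rho^*_i\big)=0$ for all $i\in V$ and $t\ge0$. Consider the Hamiltonian system on $\{\rho\in\mathbb R^N:\rho_i>0\}\times\mathbb R^N$ $$\frac{\partial S_i}{\partial t}=-m_{ii}-\frac12\sum_{j\in N(i)}e^{S_j-S_i}m_{ij}\frac{\sqrt{\rho_j}}{\sqrt{\rho_i}}-\frac12\sum_{j\in N(i)}e^{S_i-S_j}m_{ji}\frac{\sqrt{\rho_j}}{\sqrt{\rho_i}},$$ $$\frac{\partial\rho_i}{\partial t}=\sum_{j\in N(i)}e^{S_i-S_j}m_{ji}\sqrt{\rho_j\rho_i}-\sum_{j\in N(i)}e^{S_j-S_i}m_{ij}\sqrt{\rho_i\rho_j},\qquad i\in V.$$ Then there exists $S^*\in\mathbb R^N$ such that $(\rho^*,S^* )$ is a stationary point of this system, i.e. the constant pair $(\rho(t),S(t))\equiv(\rho^*,S^*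 )$ is a solution.
   Context: This system is the Hamiltonian system $\partial_t\rho=\partial_S\tilde{\mathcal H}$, $\partial_tS=-\partial_\rho\tilde{\mathcal H}$ with Hamiltonian $\tilde{\mathcal H}(\rho,S)=\sum_{i\in V}\sum_{j\in N(i)}e^{S_j-S_i}m_{ij}\sqrt{\rho_i\rho_j}$ (using $m_{ii}=-\sum_{j\in N(i)}m_{ij}$), obtained from the critical point equations of the discrete Schrödinger bridge problem (relative entropy with respect to the reference process) via the change of variables $S=\psi-\frac12\ln\rho$. *)

From HB Require Import structures.
From mathcomp Require Import all_boot all_order all_algebra.
From mathcomp Require Import all_classical all_reals all_analysis.
Set Implicit Arguments. Unset Strict Implicit. Unset Printing Implicit Defensive.
Import Order.TTheory GRing.Theory Num.Theory.
Local Open Scope ring_scope.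

(* A finite simple undirected graph on V = 'I_N (vertices 1..N renamed 0..N-1),
   given by an adjacency relation e; N(i) = [pred j | e i j]. *)
Definition simple_graph (N : nat) (e : rel 'I_N) : Prop :=
  (forall i, ~~ e i i) /\ (forall i j, e i j = e j i).

Definition graph_connected (N : nat) (e : rel 'I_N) : Prop :=
  forall i j, connect e i j.

Definition mdiag (R : realType) (N : nat) (e : rel 'I_N)
  (m : R -> 'I_N -> 'I_N -> R) (t : R) (i : 'I_N) : R :=
  - \sum_(j | e i j) m t i j.

Definition dS_field (R : realType) (N : nat) (e : rel 'I_N)
  (m : R -> 'I_N -> 'I_N -> R) (t : R) (rho S : 'I_N -> R) (i : 'I_N) : R :=
  - mdiag e m t i
  - 2^-1 * \sum_(j | e i j)
        expR (S j - S i) * m t i j * (Num.sqrt (rho j) / Num.sqrt (rho i))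
  - 2^-1 * \sum_(j | e i j)
        expR (S i - S j) * m t j i * (Num.sqrt (rho j) / Num.sqrt (rho i)).

Definition drho_field (R : realType) (N : nat) (e : rel 'I_N)
  (m : R -> 'I_N -> 'I_N -> R) (t : R) (rho S : 'I_N -> R) (i : 'I_N) : R :=
  \sum_(j | e i j) expR (S i - S j) * m t j i * Num.sqrt (rho j * rho i)
  - \sum_(j | e i j) expR (S j - S i) * m t i j * Num.sqrt (rho i * rho j).

Definition is_solution (R : realType) (N : nat) (e : rel 'I_N)
  (m : R -> 'I_N -> 'I_N -> R) (rho S : R -> 'I_N -> R) : Prop :=
  forall t : R, 0 <= t -> forall i : 'I_N,
    0 < rho t i /\
    is_derive t 1 (fun s => S s i) (dS_field e m t (rho t) (S t) i) /\
    is_derive t 1 (fun s => rho s i) (drho_field e m t (rho t) (S t) i).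

From HB Require Import structures.
From mathcomp Require Import all_boot all_order all_algebra.
From mathcomp Require Import all_classical all_reals all_analysis.
From mathcomp Require Import ring.
Import Order.TTheory GRing.Theory Num.Theory.
Local Open Scope ring_scope.

(* With the phase S = -(1/2) ln rho one has e^(S_j - S_i) sqrt(rho_j) = sqrt(rho_i),
   so both equations of the system collapse onto the master equation of the
   reference process; a stationary measure makes its right-hand side vanish,
   hence rho^* together with its half-log phase is an equilibrium. *)

Definition master_field {R : realType} {N : nat} (e : rel 'I_N)
  (m : R -> 'I_N -> 'I_N -> R) (t : R) (rho : 'I_N -> R) (i : 'I_N) : R :=
  \sum_(j | e i j) (m t j i * rho j - m t i j * rho i).

Definition half_log_phase {R : realType} {N : nat} (rho : 'I_N -> R) (i : 'I_N) : R :=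
  - ln (Num.sqrt (rho i)).

Section HalfLogPhase.
Variables (R : realType) (N : nat) (e : rel 'I_N) (m : R -> 'I_N -> 'I_N -> R).
Variables (t : R) (rho : 'I_N -> R).
Hypothesis rho_gt0 : forall i, 0 < rho i.

Local Notation S := (half_log_phase rho).

Let sqrt_rho_gt0 i : 0 < Num.sqrt (rho i).
Proof. by rewrite sqrtr_gt0. Qed.

Let sqr_sqrt_rho i : Num.sqrt (rho i) ^+ 2 = rho i.
Proof. by rewrite sqr_sqrtr // ltW. Qed.

Lemma expR_half_log_phaseB i j :
  expR (S j - S i) = Num.sqrt (rho i) / Num.sqrt (rho j).
Proof.
by rewrite /half_log_phase opprK addrC expRD expRN !lnK ?posrE.
Qed.

Lemma master_fieldE i :
  master_field e m t rho i =
  \sum_(j | e i j) m t j i * rho j - (\sum_(j | e i j) m t i j) * rho i.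
Proof. by rewrite /master_field big_split /= sumrN mulr_suml. Qed.

Lemma drho_field_half_log_phase i :
  drho_field e m t rho S i = master_field e m t rho i.
Proof.
rewrite /drho_field /master_field big_split /= sumrN.
congr (_ - _); apply: eq_bigr => j _;
  have [si sj] := (sqrt_rho_gt0 i, sqrt_rho_gt0 j);
  rewrite expR_half_log_phaseB sqrtrM ?ltW //.
- by rewrite -[in RHS](sqr_sqrt_rho j); field; rewrite gt_eqF.
- by rewrite -[in RHS](sqr_sqrt_rho i); field; rewrite gt_eqF.
Qed.

Lemma dS_field_half_log_phase i :
  dS_field e m t rho S i = - master_field e m t rho i / (2 * rho i).
Proof.
rewrite /dS_field /mdiag opprK master_fieldE.
have -> : \sum_(j | e i j) expR (S j - S i) * m t i j *
    (Num.sqrt (rho j) / Num.sqrt (rho i)) = \sum_(j | e i j) m t i j.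
  apply: eq_bigr => j _; have [si sj] := (sqrt_rho_gt0 i, sqrt_rho_gt0 j).
  by rewrite expR_half_log_phaseB; field; rewrite !gt_eqF.
have -> : \sum_(j | e i j) expR (S i - S j) * m t j i *
    (Num.sqrt (rho j) / Num.sqrt (rho i)) = (\sum_(j | e i j) m t j i * rho j) / rho i.
  rewrite mulr_suml; apply: eq_bigr => j _.
  have [si sj] := (sqrt_rho_gt0 i, sqrt_rho_gt0 j).
  rewrite expR_half_log_phaseB -[in RHS](sqr_sqrt_rho i) -[in RHS](sqr_sqrt_rho j).
  by field; rewrite !gt_eqF.
have rho_i_gt0 := rho_gt0 i.
by field; rewrite gt_eqF.
Qed.

End HalfLogPhase.

Lemma is_solution_cst (R : realType) (N : nat) (e : rel 'I_N)
  (m : R -> 'I_N -> 'I_N -> R) (rho S : 'I_N -> R) :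
  (forall i, 0 < rho i) ->
  (forall t, 0 <= t -> forall i,
     dS_field e m t rho S i = 0 /\ drho_field e m t rho S i = 0) ->
  is_solution e m (fun _ => rho) (fun _ => S).
Proof.
move=> rho_gt0 fields0 t t_ge0 i; have [-> ->] := fields0 t t_ge0 i.
by split; [exact: rho_gt0 | split; exact: is_derive_cst].
Qed.

Theorem mainTheorem3 (R : realType) (N : nat) (e : rel 'I_N)
  (m : R -> 'I_N -> 'I_N -> R) (rhostar : 'I_N -> R) :
  simple_graph e ->
  graph_connected e ->
  (forall t : R, 0 <= t -> forall i j : 'I_N, e i j -> 0 <= m t i j) ->
  (forall i, 0 < rhostar i) ->
  \sum_i rhostar i = 1 ->
  (forall t : R, 0 <= t -> forall i : 'I_N,
     \sum_(j | e i j) (m t j i * rhostar j - m t i j * rhostar i) = 0) ->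
  exists Sstar : 'I_N -> R,
    is_solution e m (fun _ => rhostar) (fun _ => Sstar).
Proof.
move=> _ _ _ rhostar_gt0 _ stationary.
exists (half_log_phase rhostar); apply: is_solution_cst => // t t_ge0 i.
have master0 : master_field e m t rhostar i = 0 by exact: stationary.
rewrite dS_field_half_log_phase // drho_field_half_log_phase //.
by rewrite master0 oppr0 mul0r.
Qed.
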